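(* Let $n\ge1$ and let $F:\mathbb{F}_{2^n}\to\mathbb{F}_{2^n}$ be any function. Then $$2^n\sum_{v_1,v_2\in \mathbb{F}_{2^n}}\ \sum_{\substack{(x_1,x_2,x_3)\in \mathbb{F}_{2^n}^3\\ v_1x_1+v_2x_2+(v_1+v_2)x_3=0}} (-1)^{tr_n(v_1F(x_1)+v_2F(x_2)+(v_1+v_2)F(x_3))}\;-\;\sum_{v_1,v_2\in \mathbb{F}_{2^n}}W_F(0,v_1)W_F(0,v_2)W_F(0,v_1+v_2)$$ $$+\;2^{n+2}\sum_{v\in \mathbb{F}_{2^n}^*}W_F^2(0,v)\;-\;2^{4n+2}\;+\;2^{3n+2}\;\ge\;0,$$ and equality holds if and only if $F$ is an o-polynomial.
   Context: For a positive integer $n$, $tr_n:\mathbb{F}_{2^n}\to\mathbb{F}_2$ denotes the absolute trace $tr_n(x)=x+x^2+\cdots+x^{2^{n-1}}$, and $\mathbb{F}_{2^n}^*=\mathbb{F}_{2^n}\setminus\{0\}$. For $F:\mathbb{F}_{2^n}\to\mathbb{F}_{2^n}$ and $(u,v)\in\mathbb{F}_{2^n}^2$, the Walsh transform is $W_F(u,v)=\sum_{x\in\mathbb{F}_{2^n}}(-1)^{tr_n(vF(x))+tr_n(ux)}$. In the projective plane $PG(2,2^n)$, a hyperoval is a set of $2^n+2$ points no three of which lie on a common line. A function (polynomial) $F$ over $\mathbb{F}_{2^n}$ is an o-polynomial if $\{(1,t,F(t)) : t\in\mathbb{F}_{2^n}\}\cup\{(0,1,0),(0,0,1)\}$ is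 a hyperoval of $PG(2,2^n)$. Equivalently (known fact), for every $a\in\mathbb{F}_{2^n}$ and $b\in\mathbb{F}_{2^n}^*$ the equation $F(x)+bx=a$ has $0$ or $2$ solutions in $\mathbb{F}_{2^n}$. *)

From HB Require Import structures.
From mathcomp Require Import all_boot all_order all_algebra all_field.
Set Implicit Arguments. Unset Strict Implicit. Unset Printing Implicit Defensive.
Import GRing.Theory Num.Theory.
Local Open Scope ring_scope.

Section Defs.
Variable K : finFieldType.

Definition tr (n : nat) (x : K) : K := \sum_(i < n) x ^+ (2 ^ i)%N.

(* (-1)^b for b in F_2 (embedded in K as 0 or 1) *)
Definition sgn (b : K) : int := if b == 0 then 1 else -1.

Definition walsh (n : nat) (F : K -> K) (u v : K) : int :=
  \sum_(x : K) sgn (tr n (v * F x) + tr n (u * x)).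

(* Projective plane PG(2,K): points are represented by nonzero vectors of K^3,
   two representatives denote the same point iff they are proportional.
   A line is given by a nonzero vector a : it is the set of points p with a.p = 0. *)
Definition vec3 := (K * K * K)%type.
Definition dot3 (a p : vec3) : K := a.1.1 * p.1.1 + a.1.2 * p.1.2 + a.2 * p.2.
Definition scale3 (c : K) (p : vec3) : vec3 := (c * p.1.1, c * p.1.2, c * p.2).
Definition same_point (p q : vec3) : Prop := exists c : K, c != 0 /\ p = scale3 c q.
Definition on_common_line (p q r : vec3) : Prop :=
  exists a : vec3, a != (0, 0, 0) /\ dot3 a p = 0 /\ dot3 a q = 0 /\ dot3 a r = 0.

(* A hyperoval of PG(2,2^n), given as a list of its points (one representative
   each): 2^n+2 distinct points, no three of which lie on a common line. *)
Definition is_hyperoval (n : nat) (S : seq vec3) : Prop :=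
  [/\ size S = (2 ^ n + 2)%N,
      (forall i, (i < size S)%N -> nth (0,0,0) S i != (0, 0, 0)),
      (forall i j, (i < size S)%N -> (j < size S)%N -> i <> j ->
          ~ same_point (nth (0,0,0) S i) (nth (0,0,0) S j)) &
      (forall i j k, (i < size S)%N -> (j < size S)%N -> (k < size S)%N ->
          i <> j -> j <> k -> i <> k ->
          ~ on_common_line (nth (0,0,0) S i) (nth (0,0,0) S j) (nth (0,0,0) S k))].

Definition opoly_points (F : K -> K) : seq vec3 :=
  [seq (1, t, F t) | t <- enum K] ++ [:: (0, 1, 0); (0, 0, 1)].

Definition is_opolynomial (n : nat) (F : K -> K) : Prop :=
  is_hyperoval n (opoly_points F).

Definition main_expr (n : nat) (F : K -> K) : int :=
  (2 ^ n)%:Z * (\sum_(v1 : K) \sum_(v2 : K)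
      \sum_(x1 : K) \sum_(x2 : K) \sum_(x3 : K |
             v1 * x1 + v2 * x2 + (v1 + v2) * x3 == 0)
          sgn (tr n (v1 * F x1 + v2 * F x2 + (v1 + v2) * F x3)))
  - (\sum_(v1 : K) \sum_(v2 : K)
        walsh n F 0 v1 * walsh n F 0 v2 * walsh n F 0 (v1 + v2))
  + (2 ^ (n + 2))%:Z * (\sum_(v : K | v != 0) walsh n F 0 v ^+ 2)
  - (2 ^ (4 * n + 2))%:Z + (2 ^ (3 * n + 2))%:Z.

End Defs.

(* Orthogonality of the additive character x |-> (-1)^(tr x) turns each character
   sum of [main_expr] into a count of coincidences of F.  The Walsh terms count
   pairs and triples with equal F-values; the constrained sum, once its linear
   condition is detected by one more character sum over u, counts triples with
   equal values of F x + u x, over all u.  Splitting these counts according to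
   which points coincide collapses [main_expr] to 2^(2n) (D + E), where E counts
   ordered pairs x <> y with F x = F y and D counts triples of distinct points on
   which some F + u id, u <> 0, is constant.  So the expression is non-negative,
   and it vanishes iff F is injective and every F + u id (u <> 0) is at most
   2-to-1.  That is exactly the hyperoval condition: a line a1 X + a2 Y + a3 Z = 0
   with a3 <> 0 meets the points (1, t, F t) where F t + (a2/a3) t = - a1/a3, and
   passes through (0, 1, 0) iff a2 = 0. *)

From mathcomp Require Import all_boot all_order all_algebra all_field.
From mathcomp Require Import ring zify.
Set Implicit Arguments. Unset Strict Implicit. Unset Printing Implicit Defensive.
Import GRing.Theory Num.Theory.
Local Open Scope ring_scope.

Definition ind (b : bool) : int := if b then 1 else 0.

Lemma ind_ge0 (b : bool) : 0 <= ind b.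
Proof. by case: b. Qed.

Lemma ind_and (a b : bool) : ind (a && b) = ind a * ind b.
Proof. by case: a; case: b. Qed.

Lemma sum_ind_eq0 (I : finType) (P : pred I) :
  \sum_(i : I) ind (P i) = 0 <-> forall i, ~~ P i.
Proof.
split=> [/psumr_eq0P P0 i | notP]; last by apply: big1 => i _; rewrite /ind (negPf (notP i)).
by apply/negP => Pi; have := P0 (fun j _ => ind_ge0 (P j)) i isT; rewrite /ind Pi.
Qed.

Lemma sum_ind_eq_mul (I : finType) (a : I) (c : I -> int) :
  \sum_(i : I) ind (i == a) * c i = c a.
Proof. by rewrite (bigD1 a) //= eqxx mul1r big1 ?addr0 // => i /negPf->; rewrite mul0r. Qed.

Lemma sum_ind_eq (I : finType) (a : I) : \sum_(i : I) ind (i == a) = 1.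
Proof. by have := sum_ind_eq_mul a (fun=> 1); under eq_bigr do rewrite mulr1. Qed.

Lemma exchange_big_in3 (R : nmodType) (I J : finType) (f : I -> J -> J -> J -> R) :
  \sum_(i : I) \sum_(x1 : J) \sum_(x2 : J) \sum_(x3 : J) f i x1 x2 x3
  = \sum_(x1 : J) \sum_(x2 : J) \sum_(x3 : J) \sum_(i : I) f i x1 x2 x3.
Proof. by do 3!(rewrite exchange_big; apply: eq_bigr => ? _). Qed.

Section FibreCounts.
Variables (T : finType) (R : eqType) (g : T -> R).

Definition fibre_pairs : int := \sum_(x : T) \sum_(y : T) ind (g x == g y).

Definition fibre_triples : int :=
  \sum_(x1 : T) \sum_(x2 : T) \sum_(x3 : T) ind ((g x1 == g x3) && (g x2 == g x3)).

Definition collisions : int := \sum_(x : T) \sum_(y : T) ind ((x != y) && (g x == g y)).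

Definition triple_collisions : int :=
  \sum_(x1 : T) \sum_(x2 : T) \sum_(x3 : T)
    ind [&& x1 != x2, x2 != x3, x3 != x1, g x1 == g x3 & g x2 == g x3].

Definition at_most_2_to_1 : Prop := forall c, (#|[pred x | g x == c]| <= 2)%N.

Lemma fibre_pairsE : fibre_pairs = (#|T|)%:Z + collisions.
Proof.
have -> : (#|T|)%:Z = \sum_(x : T) 1 by rewrite sumr_const -natz.
rewrite -big_split /=; apply: eq_bigr => x _.
rewrite -(sum_ind_eq x) -big_split /=; apply: eq_bigr => y _.
by case: (eqVneq x y) => [->|_]; rewrite ?eqxx /= ?addr0 ?add0r.
Qed.

Lemma fibre_triplesE : fibre_triples = triple_collisions + (#|T|)%:Z + 3%:Z * collisions.
Proof.
have split_ind x1 x2 x3 : ind ((g x1 == g x3) && (g x2 == g x3)) =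
    ind [&& x1 != x2, x2 != x3, x3 != x1, g x1 == g x3 & g x2 == g x3]
    + ind (x1 == x3) * ind (x3 == x2)
    + ind (x1 == x3) * ind ((x2 != x3) && (g x2 == g x3))
    + ind (x2 == x3) * ind ((x1 != x3) && (g x1 == g x3))
    + ind (x2 == x1) * ind ((x1 != x3) && (g x1 == g x3)).
  case: (eqVneq x1 x3) => [->|n13]; case: (eqVneq x2 x3) => [->|n23]; rewrite ?eqxx /=.
  - lia.
  - by case: (g x2 == g x3) => /=; lia.
  - by rewrite [x3 == x1]eq_sym (negPf n13) andbF andbT; case: (g x1 == g x3) => /=; lia.
  case: (eqVneq x2 x1) => [->|n21] /=; rewrite ?eqxx ?andbb ?n21 /=.
    by case: (g x1 == g x3) => /=; lia.
  by case: (g x1 == g x3); case: (g x2 == g x3) => /=; lia.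
rewrite /fibre_triples.
under eq_bigr do under eq_bigr do under eq_bigr do rewrite split_ind.
under eq_bigr do under eq_bigr do rewrite !big_split.
under eq_bigr do rewrite !big_split.
rewrite !big_split /= -/triple_collisions.
have push_in (c : T -> T -> T -> int) : \sum_(x1 : T) \sum_(x2 : T) \sum_(x3 : T) c x1 x2 x3
    = \sum_(x2 : T) \sum_(x3 : T) \sum_(x1 : T) c x1 x2 x3.
  by rewrite exchange_big; under eq_bigr do rewrite exchange_big.
have -> : \sum_(x1 : T) \sum_(x2 : T) \sum_(x3 : T) ind (x1 == x3) * ind (x3 == x2) = (#|T|)%:Z.
  rewrite push_in; under eq_bigr do under eq_bigr do rewrite sum_ind_eq_mul.
  by under eq_bigr do rewrite sum_ind_eq; rewrite sumr_const -natz.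
have -> : \sum_(x1 : T) \sum_(x2 : T) \sum_(x3 : T)
    ind (x1 == x3) * ind ((x2 != x3) && (g x2 == g x3)) = collisions.
  by rewrite push_in; under eq_bigr do under eq_bigr do rewrite sum_ind_eq_mul.
have -> : \sum_(x1 : T) \sum_(x2 : T) \sum_(x3 : T)
    ind (x2 == x3) * ind ((x1 != x3) && (g x1 == g x3)) = collisions.
  by apply: eq_bigr => x1 _; rewrite exchange_big; under eq_bigr do rewrite sum_ind_eq_mul.
have -> : \sum_(x1 : T) \sum_(x2 : T) \sum_(x3 : T)
    ind (x2 == x1) * ind ((x1 != x3) && (g x1 == g x3)) = collisions.
  by apply: eq_bigr => x1 _; under eq_bigr do rewrite -big_distrr; rewrite sum_ind_eq_mul.
ring.
Qed.

Lemma collisions_ge0 : 0 <= collisions.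
Proof. by do 2!(apply: sumr_ge0 => ? _); apply: ind_ge0. Qed.

Lemma triple_collisions_ge0 : 0 <= triple_collisions.
Proof. by do 3!(apply: sumr_ge0 => ? _); apply: ind_ge0. Qed.

Lemma collisions_eq0 : collisions = 0 <-> injective g.
Proof.
rewrite /collisions pair_bigA sum_ind_eq0 /=; split=> [no_coll x y gxy | inj_g [x y]].
  by apply/eqP; move: (no_coll (x, y)); rewrite /= gxy eqxx andbT negbK.
by apply/nandP; case: (eqVneq x y) => [_|nxy]; [left | right; rewrite (inj_eq inj_g)].
Qed.

Lemma triple_collisions_eq0 : triple_collisions = 0 <-> at_most_2_to_1.
Proof.
rewrite /triple_collisions; under eq_bigr do rewrite pair_bigA.
rewrite pair_bigA sum_ind_eq0 /=; split=> [no_coll c | le2 [x1 [x2 x3]]] /=.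
  rewrite leqNgt; apply/card_gt2P => -[x [y [z [[]]]]]; rewrite !inE => /eqP gx /eqP gy /eqP gz.
  by case=> nxy nyz nzx; move: (no_coll (x, (y, z))); rewrite /= nxy nyz nzx gx gy gz eqxx.
apply/negP => /and5P[n12 n23 n31 /eqP g13 /eqP g23]; move: (le2 (g x3)).
by rewrite leqNgt => /card_gt2P; apply; exists x1, x2, x3; rewrite !inE g13 g23 eqxx.
Qed.
End FibreCounts.

Lemma eq_fibre_triples (T : finType) (R : eqType) (g h : T -> R) :
  g =1 h -> fibre_triples g = fibre_triples h.
Proof.
move=> gh; apply: eq_bigr => x1 _; apply: eq_bigr => x2 _; apply: eq_bigr => x3 _.
by rewrite !gh.
Qed.

Section AbsoluteTrace.
Variables (n : nat) (K : finFieldType).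
Hypotheses (n_gt0 : (0 < n)%N) (cardK : #|K| = (2 ^ n)%N).

Lemma pchar2_finField : 2%N \in [pchar K].
Proof. by apply: (card_finPcharP cardK). Qed.

Lemma trD (x y : K) : tr n (x + y) = tr n x + tr n y.
Proof.
rewrite /tr -big_split; apply: eq_bigr => i _; apply: exprDn_pchar.
by rewrite pnatX pnatE // pchar2_finField.
Qed.

Lemma addr_eq0_char2 (x y : K) : (x + y == 0) = (x == y).
Proof. by rewrite addr_eq0 (oppr_pchar2 pchar2_finField). Qed.

Lemma tr0 : tr n (0 : K) = 0.
Proof. by rewrite /tr big1 // => i _; rewrite expr0n expn_eq0. Qed.

Lemma tr_idem (x : K) : tr n x ^+ 2 = tr n x.
Proof.
have sqr_additive : {morph (fun y : K => y ^+ 2) : y z / y + z}.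
  by move=> y z; rewrite /= exprDn_pchar // pnatE // pchar2_finField.
rewrite /tr (big_morph _ sqr_additive (expr0n _ 2)).
have frobK : x ^+ (2 ^ n) = x by rewrite -cardK expf_card.
case: n n_gt0 frobK => [//|m] _ frobK.
rewrite big_ord_recr big_ord_recl /= -exprM -expnSr frobK addrC; congr (_ + _).
by apply: eq_bigr => i _; rewrite -exprM -expnSr.
Qed.

Lemma tr_eq01 (x : K) : (tr n x == 0) || (tr n x == 1).
Proof.
have : tr n x * (tr n x - 1) == 0 by rewrite mulrBr mulr1 -expr2 tr_idem subrr.
by rewrite mulf_eq0 subr_eq0.
Qed.

(* [tr n] is a polynomial of degree 2^(n-1) < #|K|, so it cannot vanish on K. *)
Lemma exists_tr_neq0 : exists a : K, tr n a != 0.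
Proof.
apply/existsP; apply: contraT; rewrite negb_exists => /forallP tr_eq0.
pose p : {poly K} := \sum_(i < n) 'X^(2 ^ i).
have pE x : p.[x] = tr n x by rewrite horner_sum; apply: eq_bigr => i _; rewrite hornerXn.
have p_neq0 : p != 0.
  suff : p`_1 != 0 by apply: contraNneq => ->; rewrite coef0.
  rewrite coef_sum; case: n n_gt0 => [//|m] _.
  rewrite big_ord_recl big1 => [|i _]; last first.
    by rewrite coefXn ltn_eqF // -{1}(expn0 2) ltn_exp2l.
  by rewrite addr0 coefXn expn0 eqxx oner_eq0.
have size_p : (size p <= (2 ^ n.-1).+1)%N.
  apply: leq_trans (size_sum _ _ _) _; apply/bigmax_leqP => i _.
  by rewrite size_polyXn ltnS leq_pexp2l // -ltnS prednK.
have roots_p : all (root p) (enum K).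
  by apply/allP => x _; rewrite /root pE -[_ == 0]negbK tr_eq0.
have := max_poly_roots p_neq0 roots_p (enum_uniq K).
rewrite -cardT cardK => /leq_trans/(_ size_p).
by case: n n_gt0 => [//|m] _; rewrite expnS ltnS /=; have := expn_gt0 2 m; lia.
Qed.

Definition tchar (x : K) : int := sgn (tr n x).

Lemma tchar0 : tchar 0 = 1.
Proof. by rewrite /tchar tr0 /sgn eqxx. Qed.

Lemma tcharD (x y : K) : tchar (x + y) = tchar x * tchar y.
Proof.
rewrite /tchar /sgn trD.
have one_neq0 : (1 : K) != 0 := oner_neq0 K.
by case/orP: (tr_eq01 x) => /eqP->; case/orP: (tr_eq01 y) => /eqP->;
  rewrite ?addr0 ?add0r ?(addrr_pchar2 pchar2_finField) ?eqxx ?(negPf one_neq0).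
Qed.

Lemma sum_tcharM (y : K) :
  \sum_(v : K) tchar (v * y) = (#|K|)%:Z * ind (y == 0).
Proof.
have [->|y_neq0] := eqVneq y 0.
  by under eq_bigr do rewrite mulr0 tchar0; rewrite sumr_const -natz mulr1.
rewrite [LHS](reindex_inj (mulIf (invr_neq0 y_neq0))) /=.
under eq_bigr do rewrite divfK //.
have [a tra_neq0] := exists_tr_neq0.
set S := \sum_(v : K) tchar v.
rewrite mulr0; suff : S = - S by lia.
rewrite {1}/S (reindex_inj (addrI a)) /=.
under eq_bigr do rewrite tcharD.
by rewrite -big_distrr /= /tchar /sgn (negPf tra_neq0) mulN1r.
Qed.

End AbsoluteTrace.

Section Identity.
Variables (n : nat) (K : finFieldType).
Hypotheses (n_gt0 : (0 < n)%N) (cardK : #|K| = (2 ^ n)%N).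
Variable F : K -> K.

Local Notation Q := ((#|K|)%:Z).
Local Notation tchar := (tchar n).

Definition twist (u x : K) : K := F x + u * x.

Lemma sum_tchar_fibre_triples (H : K -> K) :
  \sum_(v1 : K) \sum_(v2 : K) \sum_(x1 : K) \sum_(x2 : K) \sum_(x3 : K)
    tchar (v1 * H x1 + v2 * H x2 + (v1 + v2) * H x3)
  = Q ^+ 2 * fibre_triples H.
Proof.
under eq_bigr do rewrite exchange_big_in3.
rewrite exchange_big_in3 /fibre_triples !mulr_sumr; apply: eq_bigr => x1 _.
rewrite mulr_sumr; apply: eq_bigr => x2 _; rewrite mulr_sumr; apply: eq_bigr => x3 _.
have split_arg (v1 v2 : K) : v1 * H x1 + v2 * H x2 + (v1 + v2) * H x3
    = v1 * (H x1 + H x3) + v2 * (H x2 + H x3) by ring.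
under eq_bigr do under eq_bigr do rewrite split_arg (tcharD n_gt0 cardK).
rewrite -big_distrlr /= !(sum_tcharM n_gt0 cardK) !(addr_eq0_char2 cardK) ind_and.
ring.
Qed.

Lemma walshE (v : K) : walsh n F 0 v = \sum_(x : K) tchar (v * F x).
Proof. by apply: eq_bigr => x _; rewrite mul0r (tr0 _ K) addr0. Qed.

Lemma sum_walsh_cube :
  \sum_(v1 : K) \sum_(v2 : K) walsh n F 0 v1 * walsh n F 0 v2 * walsh n F 0 (v1 + v2)
  = Q ^+ 2 * fibre_triples F.
Proof.
rewrite -sum_tchar_fibre_triples; apply: eq_bigr => v1 _; apply: eq_bigr => v2 _.
rewrite !walshE big_distrlr big_distrl /=; apply: eq_bigr => x1 _.
rewrite big_distrl /=; apply: eq_bigr => x2 _; rewrite big_distrr /=; apply: eq_bigr => x3 _.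
by rewrite -!(tcharD n_gt0 cardK).
Qed.

Lemma sum_walsh_sqr_neq0 :
  \sum_(v : K | v != 0) walsh n F 0 v ^+ 2 = Q * fibre_pairs F - Q ^+ 2.
Proof.
have sum_sqr : \sum_(v : K) walsh n F 0 v ^+ 2 = Q * fibre_pairs F.
  under eq_bigr => v _ do rewrite walshE expr2 big_distrlr /=.
  rewrite exchange_big mulr_sumr; apply: eq_bigr => x _.
  rewrite exchange_big mulr_sumr; apply: eq_bigr => y _.
  under eq_bigr do rewrite -(tcharD n_gt0 cardK) -mulrDr.
  by rewrite (sum_tcharM n_gt0 cardK) (addr_eq0_char2 cardK).
have walsh0 : walsh n F 0 0 = Q.
  by rewrite walshE; under eq_bigr do rewrite mul0r (tchar0 _ K); rewrite sumr_const -natz.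
by rewrite -sum_sqr [in RHS](bigD1 0) //= walsh0 addrC addrK.
Qed.

Lemma sum_tchar_constrained :
  Q * (\sum_(v1 : K) \sum_(v2 : K) \sum_(x1 : K) \sum_(x2 : K)
         \sum_(x3 : K | v1 * x1 + v2 * x2 + (v1 + v2) * x3 == 0)
           tchar (v1 * F x1 + v2 * F x2 + (v1 + v2) * F x3))
  = Q ^+ 2 * \sum_(u : K) fibre_triples (twist u).
Proof.
rewrite [RHS]mulr_sumr; under [RHS]eq_bigr do rewrite -sum_tchar_fibre_triples.
transitivity (\sum_(v1 : K) \sum_(v2 : K) \sum_(x1 : K) \sum_(x2 : K) \sum_(x3 : K) \sum_(u : K)
    tchar (v1 * twist u x1 + v2 * twist u x2 + (v1 + v2) * twist u x3)); last first.
  by symmetry; do 5!(rewrite exchange_big; apply: eq_bigr => ? _).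
(* The constraint L = 0 is detected by \sum_u tchar (u * L) = #|K| [L == 0], and
   u * L + M is the phase of the constrained sum with F replaced by [twist u]. *)
rewrite mulr_sumr; apply: eq_bigr => v1 _; rewrite mulr_sumr; apply: eq_bigr => v2 _.
rewrite mulr_sumr; apply: eq_bigr => x1 _; rewrite mulr_sumr; apply: eq_bigr => x2 _.
rewrite big_mkcond mulr_sumr; apply: eq_bigr => x3 _ /=.
set L := v1 * x1 + v2 * x2 + (v1 + v2) * x3.
set M := v1 * F x1 + v2 * F x2 + (v1 + v2) * F x3.
have twist_arg (u : K) : v1 * twist u x1 + v2 * twist u x2 + (v1 + v2) * twist u x3
    = u * L + M by rewrite /twist /L /M; ring.
under eq_bigr do rewrite twist_arg (tcharD n_gt0 cardK).
by rewrite -big_distrl /= (sum_tcharM n_gt0 cardK); case: (L == 0); rewrite /= ?mulr0 ?mul0r ?mulr1.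
Qed.

Lemma twist_eq (u x y : K) : x != y ->
  (twist u x == twist u y) = (u == (F x - F y) / (y - x)).
Proof.
rewrite eq_sym -subr_eq0 => yx_neq0; rewrite -(can2_eq (mulfK yx_neq0) (divfK yx_neq0)).
by rewrite -subr_eq0 -[RHS]subr_eq0 -oppr_eq0 /twist; congr (_ == 0); ring.
Qed.

Lemma sum_twist_collisions :
  \sum_(u : K | u != 0) collisions (twist u) = Q ^+ 2 - Q - collisions F.
Proof.
have per_pair x y : \sum_(u : K | u != 0) ind ((x != y) && (twist u x == twist u y))
    = ind (x != y) - ind ((x != y) && (F x == F y)).
  have [->|nxy] := eqVneq x y; first by rewrite big1 ?subrr.
  under eq_bigr do rewrite /= twist_eq //.
  have := sum_ind_eq ((F x - F y) / (y - x)); rewrite (bigD1 0) //= => <-.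
  rewrite eq_sym mulf_eq0 invr_eq0 !subr_eq0 [y == x]eq_sym (negPf nxy) orbF.
  ring.
rewrite /collisions exchange_big; under eq_bigr do rewrite exchange_big.
under eq_bigr do under eq_bigr do rewrite per_pair.
under eq_bigr do rewrite sumrB; rewrite sumrB; congr (_ - _).
have off_diag x : \sum_(y : K) ind (x != y) = Q - 1.
  have -> : Q - 1 = \sum_(y : K) (1 - ind (y == x)).
    by rewrite sumrB sum_ind_eq sumr_const -natz.
  by apply: eq_bigr => y _; rewrite eq_sym; case: (y == x).
by under eq_bigr do rewrite off_diag; rewrite sumr_const -natz; ring.
Qed.

Lemma main_exprE : main_expr n F
  = Q ^+ 2 * (\sum_(u : K | u != 0) triple_collisions (twist u) + collisions F).
Proof.
have pow2E k : (2 ^ (k * n + 2))%:Z = 4 * Q ^+ k.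
  by rewrite cardK expnD (mulnC k n) expnM PoszM mulrC -!natz !natrX.
have sum_Q : \sum_(u : K | u != 0) Q = Q ^+ 2 - Q.
  have : \sum_(u : K) Q = Q ^+ 2 by rewrite sumr_const -mulr_natr natz expr2.
  by rewrite (bigD1 0) //= => <-; rewrite addrC addrK.
have twist0 : twist 0 =1 F by move=> x; rewrite /twist mul0r addr0.
rewrite /main_expr -[in (n + 2)%N](mul1n n) !pow2E -cardK.
rewrite sum_tchar_constrained sum_walsh_cube sum_walsh_sqr_neq0 fibre_pairsE.
rewrite (bigD1 0) //= (eq_fibre_triples twist0).
under eq_bigr do rewrite fibre_triplesE.
rewrite !big_split /= -mulr_sumr sum_twist_collisions sum_Q.
ring.
Qed.

Lemma main_expr_ge0 : 0 <= main_expr n F.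
Proof.
rewrite main_exprE mulr_ge0 ?sqr_ge0 ?addr_ge0 ?collisions_ge0 //.
by apply: sumr_ge0 => u _; apply: triple_collisions_ge0.
Qed.

Lemma main_expr_eq0 :
  main_expr n F = 0 <-> injective F /\ (forall u, u != 0 -> at_most_2_to_1 (twist u)).
Proof.
have Q_neq0 : Q ^+ 2 != 0 by rewrite expf_neq0 //; have := card_finNzRing_gt1 K; lia.
have D_ge0 : 0 <= \sum_(u : K | u != 0) triple_collisions (twist u).
  by apply: sumr_ge0 => u _; apply: triple_collisions_ge0.
rewrite main_exprE -collisions_eq0; split=> [/eqP | [E0 D0]].
  rewrite mulf_eq0 (negPf Q_neq0) paddr_eq0 ?collisions_ge0 // => /andP[/eqP D0 /eqP E0].
  split=> // u u_neq0; apply/triple_collisions_eq0.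
  exact: psumr_eq0P (fun u _ => triple_collisions_ge0 (twist u)) D0 u u_neq0.
rewrite E0 big1 ?addr0 ?mulr0 // => u u_neq0; exact/triple_collisions_eq0/D0.
Qed.
End Identity.

Lemma count_le2_nth (T : Type) (x0 : T) (s : seq T) (a : pred T) :
  (count a s <= 2)%N <->
  (forall i j k, (i < size s)%N -> (j < size s)%N -> (k < size s)%N ->
     i <> j -> j <> k -> i <> k ->
     ~ [/\ a (nth x0 s i), a (nth x0 s j) & a (nth x0 s k)]).
Proof.
rewrite -sum1_count (big_nth x0) big_mkord sum1dep_card leqNgt.
split=> [no3 i j k si sj sk nij njk nik [ai aj ak] | no3].
  move/negP: no3; apply; apply/card_gt2P.
  exists (Ordinal si), (Ordinal sj), (Ordinal sk); rewrite !inE ai aj ak.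
  by split=> //; split; apply/eqP => -[]; [exact: nij | exact: njk | move=> ki; exact: nik].
apply/negP => /card_gt2P[i [j [k [[]]]]]; rewrite !inE => ai aj ak [nij njk nki].
by apply: (no3 i j k) => // [/val_inj/eqP | /val_inj/eqP | /val_inj/esym/eqP]; apply/negP.
Qed.

Section OPolynomialPoints.
Variables (K : finFieldType) (F : K -> K).

Local Notation S := (opoly_points F).

Definition on_line (a p : vec3 K) : bool := dot3 a p == 0.

Lemma opoly_pointsP (p : vec3 K) :
  p \in S -> [\/ exists t, p = (1, t, F t), p = (0, 1, 0) | p = (0, 0, 1)].
Proof.
rewrite mem_cat => /orP[/mapP[t _ ->]|]; first by apply: Or31; exists t.
by rewrite !inE => /orP[]/eqP->; [apply: Or32 | apply: Or33].
Qed.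

Lemma opoly_points_uniq : uniq S.
Proof.
rewrite cat_uniq map_inj_uniq ?enum_uniq => [|t t' [->]] //=.
rewrite !inE orbF negb_or andbT -andbA; apply/and3P; split.
- by apply/mapP => -[t _ [/eqP]]; rewrite eq_sym oner_eq0.
- by apply/mapP => -[t _ [/eqP]]; rewrite eq_sym oner_eq0.
- by apply/eqP => -[/eqP]; rewrite oner_eq0.
Qed.

Lemma opoly_points_neq0 (p : vec3 K) : p \in S -> p != (0, 0, 0).
Proof. by case/opoly_pointsP => [[t ->]|->|->]; rewrite !xpair_eqE oner_eq0 ?andbF. Qed.

Lemma same_point_opoly (p q : vec3 K) : p \in S -> q \in S -> same_point p q -> p = q.
Proof.
move=> /opoly_pointsP Sp /opoly_pointsP Sq [c [c_neq0]].
have one_neq0 : (1 : K) != 0 := oner_neq0 K.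
case: Sp => [[t ->]|->|->]; case: Sq => [[t' ->]|->|->]; rewrite /scale3 /= ?mulr0 ?mulr1 => -[].
- by move=> <-; rewrite !mul1r => -> _.
all: try by move=> e; move: c_neq0 one_neq0; rewrite -e eqxx.
all: by [].
Qed.

Lemma count_on_line_opoly (a : vec3 K) : count (on_line a) S
  = (#|[pred t | dot3 a (1%R, t, F t) == 0%R]| + (a.1.2 == 0%R) + (a.2 == 0%R))%N.
Proof.
rewrite count_cat count_map -sum1_count big_enum_cond /= sum1_card addnA.
by rewrite /= /on_line /dot3 /= !mulr0 !mulr1 add0r addr0 !add0r addn0.
Qed.

Lemma count_on_twist_line (u c : K) : count (on_line (- c, u, 1)) S
  = (#|[pred t | twist F u t == c]| + (u == 0%R))%N.
Proof.
rewrite count_on_line_opoly /= oner_eq0 addn0; congr (_ + _)%N; apply: eq_card => t.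
by rewrite !inE /dot3 /= -[RHS]subr_eq0 /twist; congr (_ == 0); ring.
Qed.

Lemma opoly_lines_le2 :
  (forall a : vec3 K, a != (0, 0, 0) -> (count (on_line a) S <= 2)%N)
  <-> injective F /\ (forall u, u != 0 -> at_most_2_to_1 (twist F u)).
Proof.
have twist0 : twist F 0 =1 F by move=> x; rewrite /twist mul0r addr0.
split=> [le2 | [inj_F le2]].
  have fibre_le u c : (#|[pred t | twist F u t == c]| + (u == 0%R) <= 2)%N.
    by rewrite -count_on_twist_line le2 // !xpair_eqE oner_eq0 !andbF.
  split=> [x y Fxy | u u_neq0 c]; last by have := fibre_le u c; rewrite (negPf u_neq0) addn0.
  have := fibre_le 0 (F x); rewrite eqxx addn1 ltnS => /card_le1_eqP.
  by apply; rewrite inE twist0 ?Fxy.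
case=> [[a1 a2] a3] a_neq0; rewrite count_on_line_opoly /=.
have [a3_0|a3_neq0] := eqVneq a3 0.
  subst a3; have [a2_0|a2_neq0] := eqVneq a2 0.
    subst a2; rewrite eq_card0 // => t; rewrite !inE /dot3 /= !mul0r !addr0 mulr1.
    by apply/negbTE; apply: contra a_neq0 => /eqP->.
  rewrite /= addn0 addn1 ltnS; apply/card_le1_eqP => t t'; rewrite !inE /dot3 /= !mul0r !addr0.
  by move=> /eqP t0 /eqP; rewrite -t0 => /addrI/(mulfI a2_neq0).
rewrite addn0 (eq_card (_ : _ =i [pred t | twist F (a2 / a3) t == - a1 / a3])); last first.
  move=> t; rewrite !inE -[RHS]subr_eq0 -[RHS](mulrI_eq0 _ (lregP a3_neq0)).
  by congr (_ == 0); rewrite /dot3 /twist /=; field.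
have [a2_0|a2_neq0] := eqVneq a2 0.
  rewrite a2_0 mul0r addn1 ltnS; apply/card_le1_eqP => t t'; rewrite !inE !twist0.
  by move=> /eqP Ft /eqP Ft'; apply: inj_F; rewrite Ft Ft'.
by rewrite addn0 le2 // mulf_neq0 ?invr_eq0.
Qed.

Lemma is_opolynomialP (n : nat) : #|K| = (2 ^ n)%N ->
  is_opolynomial n F <-> forall a : vec3 K, a != (0, 0, 0) -> (count (on_line a) S <= 2)%N.
Proof.
move=> cardK; split=> [[_ _ _ no3] a a_neq0 | le2].
  apply/(count_le2_nth (0, 0, 0)) => i j k si sj sk nij njk nik [/eqP ai /eqP aj /eqP ak].
  by apply: (no3 i j k) => //; exists a.
split.
- by rewrite size_cat size_map -cardT cardK.
- by move=> i si; apply/opoly_points_neq0/mem_nth.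
- move=> i j si sj nij /(same_point_opoly (mem_nth _ si) (mem_nth _ sj)) /eqP.
  by rewrite nth_uniq ?opoly_points_uniq // => /eqP.
move=> i j k si sj sk nij njk nik [a [a_neq0 [ai [aj ak]]]].
have /(count_le2_nth (0, 0, 0)) no3 := le2 a a_neq0.
by apply: (no3 i j k) => //; split; apply/eqP.
Qed.

End OPolynomialPoints.

Theorem mainTheorem2 (n : nat) (K : finFieldType) (hn : (1 <= n)%N)
    (hK : #|K| = (2 ^ n)%N) (F : K -> K) :
  0 <= main_expr n F /\ (main_expr n F = 0 <-> is_opolynomial n F).
Proof.
split; first exact: main_expr_ge0.
have opolyE := iff_trans (is_opolynomialP F hK) (opoly_lines_le2 F).
exact: iff_trans (main_expr_eq0 hn hK F) (iff_sym opolyE).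
Qed.
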